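(* Let $G=A\oplus B$ be an abelian group with $\mathrm{Hom}(B,A)=\{0\}$. Then $G$ is uniformly strongly co-Hopfian if and only if both $A$ and $B$ are uniformly strongly co-Hopfian. Moreover, if $m$ is an Sco-H bound for $A$ and $n$ is an Sco-H bound for $B$, then $m+n$ is an Sco-H bound for $G$.
   Context: All groups are abelian. A group $G$ is uniformly strongly co-Hopfian if there is a fixed $m\in\mathbb N$ such that $\phi^m(G)=\phi^{m+1}(G)$ for every endomorphism $\phi$ of $G$; such an $m$ is called an Sco-H bound for $G$. *)

From HB Require Import structures.
From mathcomp Require Import all_boot all_algebra.
Set Implicit Arguments. Unset Strict Implicit. Unset Printing Implicit Defensive.
Import GRing.Theory.
Local Open Scope ring_scope.

Definition iter_image (G : zmodType) (phi : G -> G) (k : nat) : G -> Prop :=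
  fun y => exists x : G, iter k phi x = y.

Definition scoH_bound (G : zmodType) (m : nat) : Prop :=
  forall phi : {additive G -> G},
    forall y : G, iter_image phi m y <-> iter_image phi m.+1 y.

Definition unif_strongly_coHopfian (G : zmodType) : Prop :=
  exists m : nat, scoH_bound G m.

(** If [Hom(B, A) = 0], every endomorphism [phi] of [A * B] is lower triangular:
    it maps [B] into itself (inducing [delta]) and induces [alpha] on the quotient
    [A].  Given [y = phi^(m+n) x], the bound for [alpha] yields [a'] with
    [alpha^m x.1 = alpha^(m+1) a'], so [z := phi^m x - phi^(m+1) (a', 0)] lies in
    [B]; the bound for [delta] then writes [phi^n z] as [phi^(n+m+1)] of an element
    of [B], and [y = phi^n z + phi^(n+m+1) (a', 0)].  Conversely [A] and [B] are
    retracts of [A * B], and a retract inherits every Sco-H bound. *)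

From HB Require Import structures.
From mathcomp Require Import all_boot all_algebra.
Set Implicit Arguments. Unset Strict Implicit. Unset Printing Implicit Defensive.
Import GRing.Theory.
Local Open Scope ring_scope.

(* Only this inclusion matters: [phi^(m+1)(G) \subset phi^m(G)] always holds. *)
Definition image_stable (G : zmodType) (phi : G -> G) (m : nat) : Prop :=
  forall y : G, iter_image phi m y -> iter_image phi m.+1 y.

Lemma iter_imageS (G : zmodType) (phi : G -> G) m y :
  iter_image phi m.+1 y -> iter_image phi m y.
Proof. by move=> [x <-]; exists (phi x); rewrite iterSr. Qed.

Lemma scoH_boundP (G : zmodType) m :
  scoH_bound G m <-> forall phi : {additive G -> G}, image_stable phi m.
Proof.
split=> [hG phi y /hG // | hG phi y]; split; [exact: hG | exact: iter_imageS].
Qed.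

Lemma image_stable_iter (G : zmodType) (phi : G -> G) m :
  image_stable phi m -> forall j x, exists x', iter m phi x = iter (j + m) phi x'.
Proof.
move=> hphi; elim=> [|j IHj] x; first by exists x.
have [x' ->] := IHj x.
have [x'' Ex''] : iter_image phi m.+1 (iter m phi x') by apply: hphi; exists x'.
by exists x''; rewrite iterD -Ex'' addSnnS iterD.
Qed.

Lemma iter_morph (S T : Type) (f : S -> T) (g : S -> S) (h : T -> T) :
  {morph f : x / g x >-> h x} -> forall k x, f (iter k g x) = iter k h (f x).
Proof. by move=> fgh k x; elim: k => //= k <-; rewrite fgh. Qed.

Lemma iter_raddfD (G : zmodType) (phi : {additive G -> G}) k x y :
  iter k phi (x + y) = iter k phi x + iter k phi y.
Proof. by elim: k => //= k ->; rewrite raddfD. Qed.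

Lemma iter_raddfB (G : zmodType) (phi : {additive G -> G}) k x y :
  iter k phi (x - y) = iter k phi x - iter k phi y.
Proof. by elim: k => //= k ->; rewrite raddfB. Qed.

Section Retract.
Variables (G A : zmodType) (i : {additive A -> G}) (p : {additive G -> A}).
Hypothesis iK : cancel i p.

Lemma scoH_bound_retract m : scoH_bound G m -> scoH_bound A m.
Proof.
move=> /scoH_boundP hG; apply/scoH_boundP => phi _ [x <-].
pose psi : {additive G -> G} := i \o phi \o p.
have i_phi : {morph i : a / phi a >-> psi a} by move=> a /=; rewrite iK.
have p_psi : {morph p : g / psi g >-> phi g} by move=> g /=; rewrite iK.
have [|g Eg] := hG psi (i (iter m phi x)).
  by exists (i x); rewrite (iter_morph i_phi).
by exists (p g); rewrite -(iter_morph p_psi) Eg iK.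
Qed.

End Retract.

Section Extension.
Variables (A B G : zmodType) (i : B -> G) (p : {additive G -> A}).
Hypotheses (p_surj : forall a, exists g, p g = a)
  (ker_p : forall g, p g = 0 -> exists b, g = i b).
Variables (phi : {additive G -> G}) (alpha : A -> A) (delta : B -> B).
Hypotheses (p_phi : {morph p : g / phi g >-> alpha g})
  (i_delta : {morph i : b / delta b >-> phi b}).

Lemma image_stable_extension m n :
  image_stable alpha m -> image_stable delta n -> image_stable phi (m + n).
Proof.
move=> halpha hdelta _ [x <-].
have [|a' Ea'] := halpha (iter m alpha (p x)); first by exists (p x).
have [g' pg'] := p_surj a'.
have [b Eb] : exists b, iter m phi x - iter m.+1 phi g' = i b.
  by apply: ker_p; rewrite raddfB !(iter_morph p_phi) pg' Ea' subrr.
have [b' Eb'] := image_stable_iter hdelta m.+1 b.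
exists (i b' + g'); rewrite iter_raddfD.
have -> : iter (m + n).+1 phi (i b') = iter n phi (i b).
  by rewrite -!(iter_morph i_delta) Eb' addSn.
by rewrite -Eb iter_raddfB -!iterD addnS [(n + m)%N]addnC subrK.
Qed.

End Extension.

Section DirectSum.
Variables A B : zmodType.

Definition lpair (a : A) : A * B := (a, 0).
Definition rpair (b : B) : A * B := (0, b).

Fact lpair_is_nmod_morphism : nmod_morphism lpair.
Proof. by split=> // a a'; apply: injective_projections => /=; rewrite ?addr0. Qed.
HB.instance Definition _ := GRing.isNmodMorphism.Build _ _ lpair lpair_is_nmod_morphism.

Fact rpair_is_nmod_morphism : nmod_morphism rpair.
Proof. by split=> // b b'; apply: injective_projections => /=; rewrite ?addr0. Qed.
HB.instance Definition _ := GRing.isNmodMorphism.Build _ _ rpair rpair_is_nmod_morphism.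

Lemma lpairK : cancel lpair fst. Proof. by []. Qed.
Lemma rpairK : cancel rpair snd. Proof. by []. Qed.

Lemma scoH_bound_fst m : scoH_bound (A * B)%type m -> scoH_bound A m.
Proof. exact: (scoH_bound_retract lpairK). Qed.

Lemma scoH_bound_snd m : scoH_bound (A * B)%type m -> scoH_bound B m.
Proof. exact: (scoH_bound_retract rpairK). Qed.

Hypothesis hom_BA0 : forall (f : {additive B -> A}) (b : B), f b = 0.
Variable phi : {additive (A * B) -> (A * B)}.

Lemma fst_phi_rpair b : (phi (rpair b)).1 = 0.
Proof. exact: (hom_BA0 (fst \o phi \o rpair)). Qed.

Lemma fst_phi g : (phi g).1 = (phi (lpair g.1)).1.
Proof.
have Eg : g = lpair g.1 + rpair g.2.
  by case: g => a b; apply: injective_projections => /=; rewrite ?addr0 ?add0r.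
by rewrite {1}Eg raddfD /= fst_phi_rpair addr0.
Qed.

Lemma phi_rpair b : phi (rpair b) = rpair (phi (rpair b)).2.
Proof. by apply: injective_projections => //=; rewrite fst_phi_rpair. Qed.

End DirectSum.

Lemma scoH_bound_prod (A B : zmodType) :
  (forall (f : {additive B -> A}) (b : B), f b = 0) ->
  forall m n, scoH_bound A m -> scoH_bound B n -> scoH_bound (A * B)%type (m + n).
Proof.
move=> hom_BA0 m n /scoH_boundP hA /scoH_boundP hB; apply/scoH_boundP => phi.
apply: (image_stable_extension (i := @rpair A B) (p := fst)
          (alpha := fst \o phi \o @lpair A B) (delta := snd \o phi \o @rpair A B)
          _ _ _ _ (hA _) (hB _)).
- by move=> a; exists (lpair B a).
- by move=> [a b] /= ->; exists b.
- exact: fst_phi.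
- by move=> b; apply/esym/phi_rpair.
Qed.

Theorem mainTheorem9 (A B : zmodType) :
  (forall (f : {additive B -> A}) (b : B), f b = 0) ->
  (unif_strongly_coHopfian (A * B)%type <->
     unif_strongly_coHopfian A /\ unif_strongly_coHopfian B) /\
  (forall m n : nat, scoH_bound A m -> scoH_bound B n ->
     scoH_bound (A * B)%type (m + n)%N).
Proof.
move=> hom_BA0; split; last exact: scoH_bound_prod.
split=> [[m hAB] | [[m hA] [n hB]]].
  by split; exists m; [exact: scoH_bound_fst hAB | exact: scoH_bound_snd hAB].
by exists (m + n)%N; exact: scoH_bound_prod.
Qed.
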